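(* Let $n>2$ be an even integer, $a,c\in\mathbb{R}$ and $b\in\{1,-1\}$. Let $m_n(a,b,c)$ be the $(n+1)\times(n+1)$ symmetric matrix with rows/columns indexed $0,\dots,n$, $(0,0)$-entry $-nc$, $(0,j)$- and $(j,0)$-entries $b$ for $j=1,\dots,n$, and lower-right block the circulant $\mathrm{circ}(c,a,0,\dots,0,a)$ (diagonal $c$, entries $a$ at positions $(j,j')$ with $j'\equiv j\pm1\pmod n$, zeros elsewhere). Let \[\lambda_\pm(c)=\tfrac12\Bigl(2a-(n-1)c\pm\sqrt{\bigl(2a+(n+1)c\bigr)^2+4n}\Bigr),\qquad \lambda_{n/2}=c-2a,\] and, for $a\ne0$, $c_{\mathrm{trans}}=\dfrac{8a^2-n}{4(n+1)a}$. Let $\lambda_{\min}(c)$ and $\lambda_{\max}(c)$ be the smallest and largest eigenvalues of $m_n(a,b,c)$. Then: if $a<0$: $\lambda_{\min}(c)=\lambda_-(c)$, and $\lambda_{\max}(c)=\lambda_+(c)$ for $c<c_{\mathrm{trans}}$, $\lambda_{\max}(c)=c-2a$ for $c\ge c_{\mathrm{trans}}$; if $a=0$: $\lambda_{\min}(c)=\lambda_-(c)$ and $\lambda_{\max}(c)=\lambda_+(c)$; if $a>0$: $\lambda_{\min}(c)=c-2a$ for $c\le c_{\mathrm{trans}}$, $\lambda_{\min}(c)=\lambda_-(c)$ for $c>c_{\mathrm{trans}}$, and $\lambda_{\max}(c)=\lambda_+(c)$. *)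

From HB Require Import structures.
From mathcomp Require Import all_boot all_order all_algebra.
From mathcomp Require Import reals.
Set Implicit Arguments. Unset Strict Implicit. Unset Printing Implicit Defensive.
Import Order.TTheory GRing.Theory Num.Theory.
Local Open Scope ring_scope.

Definition circ_entry (R : ringType) (n : nat) (a c : R) (i j : nat) : R :=
  if i == j then c
  else if (j == (i.+1 %% n)%N) || (i == (j.+1 %% n)%N) then a
  else 0.

Definition m_mat (R : ringType) (n : nat) (a b c : R) : 'M[R]_(n.+1) :=
  \matrix_(i < n.+1, j < n.+1)
    if (i == 0%N :> nat) && (j == 0%N :> nat) then - (n%:R * c)
    else if (i == 0%N :> nat) || (j == 0%N :> nat) then b
    else circ_entry n a c (i.-1) (j.-1).

Definition lambda_plus (R : realType) (n : nat) (a c : R) : R :=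
  (2 * a - (n%:R - 1) * c
   + Num.sqrt ((2 * a + (n%:R + 1) * c) ^+ 2 + 4 * n%:R)) / 2.

Definition lambda_minus (R : realType) (n : nat) (a c : R) : R :=
  (2 * a - (n%:R - 1) * c
   - Num.sqrt ((2 * a + (n%:R + 1) * c) ^+ 2 + 4 * n%:R)) / 2.

Definition c_trans (R : realType) (n : nat) (a : R) : R :=
  (8 * a ^+ 2 - n%:R) / (4 * (n%:R + 1) * a).

Definition is_min_eigenvalue (R : realType) (m : nat) (A : 'M[R]_m) (x : R) :=
  eigenvalue A x /\ forall y, eigenvalue A y -> x <= y.
Definition is_max_eigenvalue (R : realType) (m : nat) (A : 'M[R]_m) (x : R) :=
  eigenvalue A x /\ forall y, eigenvalue A y -> y <= x.

(* The matrix m_n(a,b,c) is the circulant C = circ(c,a,0,...,0,a), whose row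
   sums are all c + 2a, bordered by the constant row and column b and the corner
   -nc.  For a left eigenvector (x, u) with eigenvalue y and S = u_1 + ... + u_n,
   the first equation and the sum of the others give (y + nc) x = b S and
   (y - c - 2a) S = n b x, so either y is a root lambda_+- of (y + nc)(y - c - 2a) = n b^2 = n, or x = 0 and
   y is an eigenvalue of C, hence |y - c| <= 2|a| by Gershgorin.  Conversely
   lambda_+- are eigenvalues, and so is c - 2a, with the alternating eigenvector
   of C (n even), which is orthogonal to the all-ones vector.  As the quadratic is
   -n < 0 at c + 2a, lambda_- <= c + 2a <= lambda_+; hence the extreme
   eigenvalues are min(lambda_-, c - 2a) and max(lambda_+, c - 2a), and which
   term wins is read off the value of the quadratic at c - 2a, namely
   4(n+1) a (c_trans - c). *)

From HB Require Import structures.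
From mathcomp Require Import all_boot all_order all_algebra.
From mathcomp Require Import reals.
From mathcomp Require Import zify ring lra.
Set Implicit Arguments. Unset Strict Implicit. Unset Printing Implicit Defensive.
Import Order.TTheory GRing.Theory Num.Theory.
Local Open Scope ring_scope.

Section BorderedMatrix.
Variables (R : fieldType) (n : nat).
Local Notation e := (const_mx 1 : 'rV[R]_n).

Definition bordered_mx (d b : R) (C : 'M[R]_n) : 'M[R]_(1 + n) :=
  block_mx d%:M (b *: e) (b *: e^T) C.

Lemma mul_const_mx_tr : e *m e^T = n%:R%:M.
Proof.
apply/matrixP => i j; rewrite !ord1 !mxE (eq_bigr (fun=> 1)) => [|k _].
  by rewrite sumr_const card_ord.
by rewrite !mxE mulr1.
Qed.

Variables (d b s : R) (C : 'M[R]_n).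
Local Notation M := (bordered_mx d b C).

Lemma eigenvalue_bordered_root y : e *m C = s *: e -> b != 0 -> (0 < n)%N ->
  (y - d) * (y - s) = n%:R * b ^+ 2 -> eigenvalue M y.
Proof.
move=> Ce b_neq0 n_gt0 y_root; apply/eigenvalueP.
exists (row_mx (y - s)%:M (b *: e)); last first.
  rewrite row_mx_eq0 negb_and scaler_eq0 negb_or b_neq0; apply/orP; right.
  by apply/eqP => /matrixP/(_ 0 (Ordinal n_gt0)); rewrite !mxE; apply/eqP/oner_neq0.
rewrite mul_row_block scale_row_mx -!scalemxAr -!scalemxAl mul_const_mx_tr Ce.
rewrite !mul_scalar_mx !scalerA -scalerDl !scale_scalar_mx -raddfD /=.
by congr row_mx; [congr _%:M; rewrite [b * b * _]mulrC -expr2 -y_root | congr (_ *: _)]; ring.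
Qed.

Lemma eigenvalue_bordered_cases y : C *m e^T = s *: e^T -> eigenvalue M y ->
  (y - d) * (y - s) = n%:R * b ^+ 2 \/ eigenvalue C y.
Proof.
move=> Ce /eigenvalueP [v]; rewrite -[v]hsubmxK; move: (lsubmx v) (rsubmx v) => x u.
rewrite mul_row_block scale_row_mx => /eq_row_mx [head_eq tail_eq] v_neq0.
have [|not_root] := eqVneq ((y - d) * (y - s)) (n%:R * b ^+ 2); [by left | right].
have /(congr1 (fun A : 'rV[R]_n => A *m e^T)) := tail_eq.
rewrite mulmxDl -!mulmxA Ce -!scalemxAl -!scalemxAr mul_const_mx_tr mul_mx_scalar.
move: head_eq; rewrite mul_mx_scalar -scalemxAr; move: (u *m e^T) => sigma.
move=> /(congr1 (fun A : 'M[R]_1 => A 0 0)) head_eq /(congr1 (fun A : 'M[R]_1 => A 0 0)).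
rewrite !mxE in head_eq * => sum_eq.
have x_eq0 : x = 0.
  have : ((y - d) * (y - s) - n%:R * b ^+ 2) * x 0 0 =
      (y - s) * (y * x 0 0 - (d * x 0 0 + b * sigma 0 0))
      + b * (y * sigma 0 0 - (b * (n%:R * x 0 0) + s * sigma 0 0)) by ring.
  rewrite head_eq sum_eq !subrr !mulr0 addr0 => /eqP.
  rewrite mulf_eq0 subr_eq0 (negPf not_root) => /eqP x00.
  by apply/matrixP => i j; rewrite !ord1 mxE.
apply/eigenvalueP; exists u; first by rewrite -tail_eq x_eq0 mul0mx add0r.
by move: v_neq0; rewrite x_eq0 row_mx_eq0 eqxx.
Qed.

Lemma eigenvalue_bordered_zero_sum y (u : 'rV[R]_n) :
  u *m C = y *: u -> u *m e^T = 0 -> u != 0 -> eigenvalue M y.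
Proof.
move=> uC u_sum0 u_neq0; apply/eigenvalueP; exists (row_mx 0 u).
  by rewrite mul_row_block -scalemxAr u_sum0 uC !mul0mx scale_row_mx !(scaler0, add0r).
by rewrite row_mx_eq0 eqxx.
Qed.
End BorderedMatrix.

Section CyclicOrdinals.
Variable n : nat.
Hypothesis n_gt2 : (2 < n)%N.

Lemma ordS_val (k : 'I_n) : ordS k = (if k.+1 == n then 0 else k.+1)%N :> nat.
Proof.
by rewrite /=; case: eqP => [->|Sk_neq_n]; [exact: modnn | apply: modn_small; have := ltn_ord k; lia].
Qed.

Lemma ordS_neq (k : 'I_n) : ordS k != k.
Proof. by apply/eqP => /(congr1 (@nat_of_ord n)); rewrite ordS_val; case: eqP; lia. Qed.

Lemma ord_pred_neq (k : 'I_n) : ord_pred k != k.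
Proof. by apply/eqP => e; have := ordS_neq (ord_pred k); rewrite ord_predK e eqxx. Qed.

Lemma ordS_neq_ord_pred (k : 'I_n) : ordS k != ord_pred k.
Proof.
apply/eqP => /(congr1 (@ordS n)); rewrite ord_predK => /(congr1 (@nat_of_ord n)).
by rewrite !ordS_val; have := ltn_ord k; do 2 case: eqP; lia.
Qed.
End CyclicOrdinals.

Lemma sumr_sign_even (R : nzRingType) m : ~~ odd m -> \sum_(i < m) (-1) ^+ i = 0 :> R.
Proof.
move=> m_even; rewrite -(big_mkord xpredT) -[m]odd_double_half (negbTE m_even) add0n.
elim: m./2 => [|k IH]; first by rewrite big_geq.
by rewrite doubleS !big_nat_recr //= IH add0r exprS mulN1r addrN.
Qed.

Section Circulant.
Variables (R : comNzRingType) (n : nat) (a c : R).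
Hypothesis n_gt2 : (2 < n)%N.

Definition circ_mx : 'M[R]_n := \matrix_(i, j) circ_entry n a c i j.

Lemma circ_mxE (i j : 'I_n) : circ_mx i j =
  if i == j then c else if (j == ordS i) || (i == ordS j) then a else 0.
Proof. by rewrite mxE. Qed.

Lemma tr_circ_mx : circ_mx^T = circ_mx.
Proof. by apply/matrixP => i j; rewrite [LHS]mxE !circ_mxE eq_sym orbC. Qed.

Lemma mul_row_circ_mx (u : 'rV[R]_n) k :
  (u *m circ_mx) 0 k = c * u 0 k + a * (u 0 (ordS k) + u 0 (ord_pred k)).
Proof.
rewrite mxE (bigD1 k) // (bigD1 (ordS k)) ?ordS_neq //= (bigD1 (ord_pred k)) /=; last first.
  by rewrite ord_pred_neq // eq_sym ordS_neq_ord_pred.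
rewrite big1 => [|i /andP[/andP[ik iSk] ipk]].
  rewrite !circ_mxE eqxx (negPf (ordS_neq _ _)) // (negPf (ord_pred_neq _ _)) //.
  by rewrite eqxx orbT ord_predK eqxx /=; ring.
rewrite circ_mxE (negPf ik) (negPf iSk) /=.
case: eqP => [kSi|]; last by rewrite mulr0.
by move: ipk; rewrite kSi ordSK eqxx.
Qed.

Local Notation e := (const_mx 1 : 'rV[R]_n).

Lemma const_mul_circ_mx : e *m circ_mx = (c + 2 * a) *: e.
Proof. by apply/matrixP => i k; rewrite ord1 mul_row_circ_mx !mxE; ring. Qed.

Lemma circ_mul_const_mx_tr : circ_mx *m e^T = (c + 2 * a) *: e^T.
Proof. by rewrite -tr_circ_mx -trmx_mul const_mul_circ_mx linearZ. Qed.

Hypothesis n_even : ~~ odd n.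

Definition alt_row : 'rV[R]_n := \row_i (-1) ^+ i.

Lemma alt_row_ordS k : alt_row 0 (ordS k) = - alt_row 0 k.
Proof.
by rewrite !mxE /= -signr_odd odd_mod ?(negbTE n_even) // signr_odd exprS mulN1r.
Qed.

Lemma alt_row_ord_pred k : alt_row 0 (ord_pred k) = - alt_row 0 k.
Proof. by rewrite -{2}(ord_predK k) alt_row_ordS opprK. Qed.

Lemma alt_mul_circ_mx : alt_row *m circ_mx = (c - 2 * a) *: alt_row.
Proof.
apply/matrixP => i k; rewrite ord1 mul_row_circ_mx alt_row_ordS alt_row_ord_pred.
by rewrite [RHS]mxE; ring.
Qed.

Lemma alt_row_sum : alt_row *m e^T = 0.
Proof.
apply/matrixP => i j; rewrite !ord1 !mxE -[RHS](sumr_sign_even R n_even).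
by apply: eq_bigr => k _; rewrite !mxE mulr1.
Qed.

Lemma alt_row_neq0 : alt_row != 0.
Proof.
apply/eqP => /matrixP/(_ 0 (Ordinal (ltnW (ltnW n_gt2)))).
by rewrite !mxE; apply/eqP/oner_neq0.
Qed.
End Circulant.

Lemma eigenvalue_circ_mx_bound (R : realFieldType) n (a c y : R) : (2 < n)%N ->
  eigenvalue (circ_mx n a c) y -> `|y - c| <= 2 * `|a|.
Proof.
move=> n_gt2 /eigenvalueP [u uC u_neq0].
(* Gershgorin's argument, at a coordinate of [u] of maximal modulus. *)
have [k _ k_max] := @arg_maxP _ _ _ (Ordinal (ltnW (ltnW n_gt2))) xpredT
  (fun i => `|u 0 i|) isT.
have uk_gt0 : 0 < `|u 0 k|.
  rewrite normr_gt0; apply: contraNneq u_neq0 => uk0.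
  apply/eqP/matrixP => i j; rewrite ord1 mxE; apply/eqP; rewrite -normr_le0.
  by rewrite -(normr0 R) -uk0; exact: k_max.
have eig_k : (y - c) * u 0 k = a * (u 0 (ordS k) + u 0 (ord_pred k)).
  have := congr1 (fun v : 'rV[R]_n => v 0 k) uC.
  by rewrite mul_row_circ_mx // mxE => uC_k; rewrite mulrBl -uC_k; ring.
rewrite -(ler_pM2r uk_gt0) -normrM eig_k normrM.
have := k_max (ordS k) isT; have := k_max (ord_pred k) isT; rewrite /=.
have := ler_normD (u 0 (ordS k)) (u 0 (ord_pred k)); have := normr_ge0 a.
nra.
Qed.

Lemma m_mat_bordered (R : fieldType) n (a b c : R) :
  m_mat n a b c = bordered_mx (- (n%:R * c)) b (circ_mx n a c) :> 'M_(1 + n).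
Proof.
apply/matrixP => i j; rewrite [LHS]mxE.
case: (split_ordP i) => i' ->; case: (split_ordP j) => j' ->;
  by rewrite ?block_mxEul ?block_mxEur ?block_mxEdl ?block_mxEdr !mxE ?ord1 ?mulr1.
Qed.

Section Lambdas.
Variables (R : realType) (n : nat) (a c : R).
Local Notation lp := (lambda_plus n a c).
Local Notation lm := (lambda_minus n a c).

Lemma lambda_minus_le_plus : lm <= lp.
Proof.
rewrite /lambda_plus /lambda_minus; set s := Num.sqrt _.
by have : 0 <= s := sqrtr_ge0 _; lra.
Qed.

Lemma lambda_factor y :
  (y + n%:R * c) * (y - (c + 2 * a)) - n%:R = (y - lp) * (y - lm).
Proof.
rewrite /lambda_plus /lambda_minus; set s := Num.sqrt _.
have -> : (y - (2 * a - (n%:R - 1) * c + s) / 2) * (y - (2 * a - (n%:R - 1) * c - s) / 2)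
    = (y - (2 * a - (n%:R - 1) * c) / 2) ^+ 2 - s ^+ 2 / 4 by field.
by rewrite sqr_sqrtr ?addr_ge0 ?sqr_ge0 ?mulr_ge0 ?ler0n //; field.
Qed.

Lemma c_plus_between_lambdas : lm <= c + 2 * a <= lp.
Proof.
have := lambda_factor (c + 2 * a); rewrite subrr mulr0 sub0r.
have := lambda_minus_le_plus; have : 0 <= n%:R :> R := ler0n _ _.
by move=> *; apply/andP; split; nra.
Qed.

Lemma lambda_factor_c_minus : a != 0 ->
  (c - 2 * a - lp) * (c - 2 * a - lm) = 4 * (n%:R + 1) * a * (c_trans n a - c).
Proof.
move=> a_neq0; rewrite -lambda_factor /c_trans; field.
by rewrite a_neq0 /=; apply/lt0r_neq0; have := ler0n R n; lra.
Qed.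

Lemma c_minus_le_lambda_plus : a < 0 -> c <= c_trans n a -> c - 2 * a <= lp.
Proof.
move=> a_lt0 c_le; have := lambda_factor_c_minus (ltr0_neq0 a_lt0).
have /andP[lm_le _] := c_plus_between_lambdas; have := ler0n R n.
have : 0 <= a * (c - c_trans n a) by apply: mulr_le0; [exact: ltW | rewrite subr_le0].
nra.
Qed.

Lemma lambda_plus_le_c_minus : a < 0 -> c_trans n a <= c -> lp <= c - 2 * a.
Proof.
move=> a_lt0 c_ge; have := lambda_factor_c_minus (ltr0_neq0 a_lt0).
have /andP[lm_le _] := c_plus_between_lambdas; have := ler0n R n.
have : a * (c - c_trans n a) <= 0 by apply: mulr_le0_ge0; [exact: ltW | rewrite subr_ge0].
nra.
Qed.

Lemma c_minus_le_lambda_minus : 0 < a -> c <= c_trans n a -> c - 2 * a <= lm.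
Proof.
move=> a_gt0 c_le; have := lambda_factor_c_minus (lt0r_neq0 a_gt0).
have /andP[_ le_lp] := c_plus_between_lambdas; have := ler0n R n.
have : 0 <= a * (c_trans n a - c) by apply: mulr_ge0; [exact: ltW | rewrite subr_ge0].
nra.
Qed.

Lemma lambda_minus_le_c_minus : 0 < a -> c_trans n a <= c -> lm <= c - 2 * a.
Proof.
move=> a_gt0 c_ge; have := lambda_factor_c_minus (lt0r_neq0 a_gt0).
have /andP[_ le_lp] := c_plus_between_lambdas; have := ler0n R n.
have : a * (c_trans n a - c) <= 0 by apply: mulr_ge0_le0; [exact: ltW | rewrite subr_le0].
nra.
Qed.
End Lambdas.

Section Spectrum.
Variables (R : realType) (n : nat) (a b c : R).
Hypotheses (n_gt2 : (2 < n)%N) (n_even : ~~ odd n) (b_sq : b ^+ 2 = 1).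
Local Notation M := (m_mat n a b c).
Local Notation lp := (lambda_plus n a c).
Local Notation lm := (lambda_minus n a c).

Lemma eigenvalue_m_mat_lambda y : (y - lp) * (y - lm) = 0 -> eigenvalue M y.
Proof.
move=> y_root; rewrite m_mat_bordered.
apply: (eigenvalue_bordered_root (s := c + 2 * a)).
- exact: const_mul_circ_mx.
- by apply/eqP => b0; move: b_sq; rewrite b0 expr0n => /esym/eqP; rewrite oner_eq0.
- exact: ltnW (ltnW n_gt2).
- by apply/eqP; rewrite opprK b_sq mulr1 -subr_eq0 lambda_factor y_root.
Qed.

Lemma eigenvalue_m_mat_c_minus : eigenvalue M (c - 2 * a).
Proof.
rewrite m_mat_bordered.
apply: (eigenvalue_bordered_zero_sum _ _ (alt_mul_circ_mx a c n_gt2 n_even)).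
- exact: alt_row_sum.
- exact: alt_row_neq0.
Qed.

Lemma m_mat_spectrum y : eigenvalue M y ->
  Num.min lm (c - 2 * a) <= y <= Num.max lp (c - 2 * a).
Proof.
rewrite m_mat_bordered ge_min le_max.
move=> /(eigenvalue_bordered_cases (circ_mul_const_mx_tr a c n_gt2)) [|/eigenvalue_circ_mx_bound].
  rewrite opprK b_sq mulr1 => /eqP; rewrite -subr_eq0 lambda_factor mulf_eq0 !subr_eq0.
  by case/orP => /eqP ->; rewrite lexx lambda_minus_le_plus.
move=> /(_ n_gt2); rewrite ler_norml => /andP[y_lo y_hi].
have /andP[lm_le le_lp] := c_plus_between_lambdas n a c.
apply/andP; split; apply/orP; case: (lerP 0 a) => [/ger0_norm | /ltr0_norm] a_norm;
  rewrite a_norm in y_lo y_hi; by [left; lra | right; lra].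
Qed.

Lemma is_min_eigenvalue_m_mat : is_min_eigenvalue M (Num.min lm (c - 2 * a)).
Proof.
split=> [|y /m_mat_spectrum /andP[] //].
rewrite minEle; case: ifP => _; last exact: eigenvalue_m_mat_c_minus.
by apply: eigenvalue_m_mat_lambda; rewrite subrr mulr0.
Qed.

Lemma is_max_eigenvalue_m_mat : is_max_eigenvalue M (Num.max lp (c - 2 * a)).
Proof.
split=> [|y /m_mat_spectrum /andP[] //].
rewrite maxEle; case: ifP => _; first exact: eigenvalue_m_mat_c_minus.
by apply: eigenvalue_m_mat_lambda; rewrite subrr mul0r.
Qed.
End Spectrum.

Theorem theorem6 (R : realType) (n : nat) (a b c : R) :
  (2 < n)%N -> ~~ odd n -> (b = 1 \/ b = -1) ->
  [/\ a < 0 ->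
        [/\ is_min_eigenvalue (m_mat n a b c) (lambda_minus n a c),
            c < c_trans n a -> is_max_eigenvalue (m_mat n a b c) (lambda_plus n a c)
          & c_trans n a <= c -> is_max_eigenvalue (m_mat n a b c) (c - 2 * a)],
      a = 0 ->
        is_min_eigenvalue (m_mat n a b c) (lambda_minus n a c) /\
        is_max_eigenvalue (m_mat n a b c) (lambda_plus n a c)
    & 0 < a ->
        [/\ c <= c_trans n a -> is_min_eigenvalue (m_mat n a b c) (c - 2 * a),
            c_trans n a < c -> is_min_eigenvalue (m_mat n a b c) (lambda_minus n a c)
          & is_max_eigenvalue (m_mat n a b c) (lambda_plus n a c)]].
Proof.
move=> n_gt2 n_even b_pm1.
have b_sq : b ^+ 2 = 1 by case: b_pm1 => ->; rewrite ?sqrrN expr1n.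
have lmin := is_min_eigenvalue_m_mat a c n_gt2 n_even b_sq.
have lmax := is_max_eigenvalue_m_mat a c n_gt2 n_even b_sq.
have /andP[lm_le le_lp] := c_plus_between_lambdas n a c.
split=> [a_lt0 | a0 | a_gt0]; [split=> [|c_lt|c_ge] | split | split=> [c_le|c_gt|]].
- by rewrite min_l in lmin; last lra.
- by rewrite max_l in lmax; last exact: c_minus_le_lambda_plus (ltW c_lt).
- by rewrite max_r in lmax; last exact: lambda_plus_le_c_minus.
- by rewrite min_l in lmin; last lra.
- by rewrite max_l in lmax; last lra.
- by rewrite min_r in lmin; last exact: c_minus_le_lambda_minus.
- by rewrite min_l in lmin; last exact: lambda_minus_le_c_minus (ltW c_gt).
- by rewrite max_l in lmax; last lra.
Qed.
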